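(* Consider the distributed quantized weight-balancing algorithm described in the context on a strongly connected digraph, with step-size $\gamma(k)=2^{-n}$ for $2^n-1\le k\le 2^{n+1}-2$. Then the sequence of weight matrices $\{\mathbf{A}(k)\}_{k\in\mathbb{Z}_+}$, $\mathbf{A}(k)=(a_{ij}(k))$, is bounded.
   Context: $\mathcal{G}=(\mathcal{V},\mathcal{E})$, $\mathcal{V}=\{1,\dots,N\}$, no self-loops, strongly connected; $\mathcal{N}_i^-=\{j:(j,i)\in\mathcal{E}\}$, $\mathcal{N}_i^+=\{j:(i,j)\in\mathcal{E}\}$, $d_i^+=|\mathcal{N}_i^+|$. Algorithm: $a_{ij}(0)=1$ if $j\in\mathcal{N}_i^-$ and $0$ otherwise; $b_i(k)=\sum_{j\in\mathcal{N}_i^-}a_{ij}(k)-\sum_{j\in\mathcal{N}_i^+}a_{ji}(k)$; $n_i(k)=1$ if $b_i(k)\ge d_i^+\gamma(k)$, else $0$; $a_{ij}(k+1)=a_{ij}(k)+n_j(k)\gamma(k)$ for $j\in\mathcal{N}_i^-$ (other entries remain $0$). *)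

From HB Require Import structures.
From mathcomp Require Import all_boot all_order all_algebra.
Set Implicit Arguments. Unset Strict Implicit. Unset Printing Implicit Defensive.
Import Order.TTheory GRing.Theory Num.Theory.
Local Open Scope ring_scope.

(* Digraph on vertices 'I_N given by a relation e : rel 'I_N;
   e j i means (j,i) is an edge, i.e. j \in N_i^- and i \in N_j^+. *)

Section Alg.
Variables (R : realFieldType) (N : nat) (e : rel 'I_N) (gamma : nat -> R).

Definition outdeg (i : 'I_N) : nat := #|[set j | e i j]|.

Definition imbalance (a : 'I_N -> 'I_N -> R) (i : 'I_N) : R :=
  \sum_(j | e j i) a i j - \sum_(j | e i j) a j i.

Definition nflag (a : 'I_N -> 'I_N -> R) (g : R) (i : 'I_N) : R :=
  if (outdeg i)%:R * g <= imbalance a i then 1 else 0.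

Fixpoint weights (k : nat) : 'I_N -> 'I_N -> R :=
  match k with
  | 0 => fun i j => if e j i then 1 else 0
  | k'.+1 =>
      let a := weights k' in
      fun i j => if e j i then a i j + nflag a (gamma k') j * gamma k' else 0
  end.
End Alg.

(* All weights on the out-edges of a node j equal a common value w_j, which
   starts at 1 and only grows.  The imbalances always sum to 0.  A node that
   has fired at least once keeps a nonnegative imbalance, and a node that has
   never fired still has w = 1, so every imbalance is at least -N and hence at
   most N^2.  Since w_u <= b_v + d_v^+ w_v <= N^2 + N w_v along each edge u -> v,
   as long as some node has not yet fired, every w is bounded by N iterations
   of x |-> N^2 + N x starting from 1.  Once every node has fired, all
   imbalances are nonnegative with sum 0, hence 0, so no node with an out-edge
   fires any more and the weights are frozen. *)
From HB Require Import structures.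
From mathcomp Require Import all_boot all_order all_algebra.
From mathcomp Require Import ring lra zify.
Import Order.TTheory GRing.Theory Num.Theory.
Local Open Scope ring_scope.

Set Implicit Arguments. Unset Strict Implicit. Unset Printing Implicit Defensive.

Lemma dyadic_step_bounds (R : realFieldType) (gamma : nat -> R)
  (Hgamma : forall n k : nat, (2 ^ n - 1 <= k <= 2 ^ n.+1 - 2)%N ->
              gamma k = (2%:R ^+ n)^-1) (k : nat) :
  0 < gamma k <= 1.
Proof.
have /andP[lo hi] := @trunc_log_bounds 2 k.+1 isT isT.
rewrite (Hgamma (trunc_log 2 k.+1)); last by apply/andP; split; lia.
have pow_ge1 : (1 : R) <= 2%:R ^+ trunc_log 2 k.+1 by rewrite exprn_ege1 ?ler1n.
by rewrite invr_gt0 invf_le1 (lt_le_trans ltr01 pow_ge1).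
Qed.

Lemma outdeg_le (N : nat) (e : rel 'I_N) (i : 'I_N) : (outdeg e i <= N)%N.
Proof. by rewrite /outdeg -[leqRHS]card_ord max_card. Qed.

Lemma sum_imbalance (R : realFieldType) (N : nat) (e : rel 'I_N)
  (a : 'I_N -> 'I_N -> R) : \sum_i imbalance e a i = 0.
Proof. by rewrite /imbalance sumrB (exchange_big_dep xpredT) //= subrr. Qed.

Lemma sum_eq0_ub (R : realFieldType) (N : nat) (F : 'I_N -> R) (c : R) :
  0 <= c -> \sum_i F i = 0 -> (forall i, - c <= F i) -> forall i, F i <= N%:R * c.
Proof.
move=> c_ge0 sum0 lb i.
have sum_shift : \sum_j (F j + c) = N%:R * c.
  by rewrite big_split /= sum0 add0r sumr_const card_ord mulr_natl.
have : F i + c <= \sum_j (F j + c).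
  rewrite (bigD1 i) //= lerDl; apply: sumr_ge0 => j _.
  by have := lb j; lra.
have := lb i; lra.
Qed.

Section WeightBalancing.

Variables (R : realFieldType) (N : nat) (e : rel 'I_N) (gamma : nat -> R).
Implicit Types (k : nat) (i j u v : 'I_N).

Definition flag k j : R := nflag e (weights e gamma k) (gamma k) j.

Definition bal k i : R := imbalance e (weights e gamma k) i.

(* [node_weight k j] is the common value of [a_ij(k)] over the out-neighbours [i] of [j]. *)
Fixpoint node_weight k j : R :=
  if k is k'.+1 then node_weight k' j + flag k' j * gamma k' else 1.

Fixpoint has_fired k j : bool :=
  if k is k'.+1 then has_fired k' j || (flag k' j == 1) else false.

Lemma weightsE k i j : weights e gamma k i j = if e j i then node_weight k j else 0.
Proof. by elim: k i j => [|k IH] i j //=; rewrite IH; case: (e j i). Qed.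

Variant flag_spec k i : R -> Prop :=
  | FlagUp of (outdeg e i)%:R * gamma k <= bal k i : flag_spec k i 1
  | FlagDown of bal k i < (outdeg e i)%:R * gamma k : flag_spec k i 0.

Lemma flagP k i : flag_spec k i (flag k i).
Proof. by rewrite /flag /nflag; case: ifP => h; constructor; rewrite // ltNge h. Qed.

Lemma flag_ge0 k i : 0 <= flag k i.
Proof. by case: flagP. Qed.

Lemma flag_le1 k i : flag k i <= 1.
Proof. by case: flagP; rewrite ?ler01. Qed.

Lemma balE k i :
  bal k i = \sum_(j | e j i) node_weight k j - (outdeg e i)%:R * node_weight k i.
Proof.
rewrite /bal /imbalance.
rewrite (eq_bigr (node_weight k)) => [|j eji]; last by rewrite weightsE eji.
rewrite [X in _ - X](eq_bigr (fun=> node_weight k i)) => [|j eij]; last by rewrite weightsE eij.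
by rewrite sumr_const /outdeg cardsE mulr_natl.
Qed.

Lemma sum_bal k : \sum_i bal k i = 0.
Proof. exact: sum_imbalance. Qed.

Lemma bal_step k i :
  bal k.+1 i = bal k i + gamma k *
     (\sum_(j | e j i) flag k j - (outdeg e i)%:R * flag k i).
Proof. by rewrite !balE /= big_split /= -mulr_suml; ring. Qed.

Lemma node_weight_unfired k i : ~~ has_fired k i -> node_weight k i = 1.
Proof.
elim: k => [|k IH] //=; rewrite negb_or => /andP[/IH -> unflagged].
by case: flagP unflagged => [_|_ _]; rewrite ?eqxx // mul0r addr0.
Qed.

Hypothesis gamma_gt0 : forall k, 0 < gamma k.

Lemma node_weight_ge1 k j : 1 <= node_weight k j.
Proof.
elim: k => [|k IH] //=.
have : 0 <= flag k j * gamma k by rewrite mulr_ge0 ?flag_ge0 ?ltW.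
lra.
Qed.

Lemma node_weight_ge0 k j : 0 <= node_weight k j.
Proof. exact: le_trans ler01 (node_weight_ge1 k j). Qed.

Lemma bal_fired_ge0 k i : has_fired k i -> 0 <= bal k i.
Proof.
elim: k => [|k IH] //=.
have in_flags : 0 <= gamma k * \sum_(j | e j i) flag k j.
  by rewrite mulr_ge0 ?(ltW (gamma_gt0 k)) ?sumr_ge0 // => j _; apply: flag_ge0.
rewrite bal_step mulrBr mulrCA.
case: flagP => [up _|down]; first by rewrite mulr1; lra.
by rewrite eq_sym oner_eq0 orbF mulr0 => /IH; lra.
Qed.

Lemma bal_ge k i : - N%:R <= bal k i.
Proof.
have N_ge0 : (0 : R) <= N%:R by rewrite ler0n.
have [/bal_fired_ge0|/node_weight_unfired unfired] := boolP (has_fired k i).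
  lra.
rewrite balE unfired mulr1.
have : 0 <= \sum_(j | e j i) node_weight k j.
  by apply: sumr_ge0 => j _; apply: node_weight_ge0.
have : (outdeg e i)%:R <= N%:R :> R by rewrite ler_nat outdeg_le.
lra.
Qed.

Lemma bal_le k i : bal k i <= N%:R * N%:R.
Proof. exact: sum_eq0_ub (ler0n _ N) (sum_bal k) (bal_ge k) i. Qed.

Definition hop (x : R) : R := N%:R * N%:R + N%:R * x.

Lemma hop_mono (x y : R) : x <= y -> hop x <= hop y.
Proof. by move=> le_xy; rewrite /hop lerD2l ler_wpM2l ?ler0n. Qed.

Lemma iter_hop_mono n (x y : R) : x <= y -> iter n hop x <= iter n hop y.
Proof. by move=> le_xy; elim: n => [|n IH] //=; apply: hop_mono. Qed.

Lemma iter_hop_ge0 n (x : R) : 0 <= x -> 0 <= iter n hop x.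
Proof.
move=> x_ge0; elim: n => [|n IH] //=.
by rewrite /hop addr_ge0 ?mulr_ge0 ?ler0n.
Qed.

Lemma iter_hop_ge n (x : R) : (0 < N)%N -> 0 <= x -> x <= iter n hop x.
Proof.
move=> N_gt0 x_ge0; elim: n => [|n IH] //=.
apply: le_trans IH _; have := iter_hop_ge0 n x_ge0.
have : (1 : R) <= N%:R by rewrite ler1n.
rewrite /hop; nra.
Qed.

Lemma node_weight_edge k u v :
  e u v -> node_weight k u <= hop (node_weight k v).
Proof.
move=> euv.
have : node_weight k u <= \sum_(j | e j v) node_weight k j.
  rewrite (bigD1 u) //= lerDl.
  by apply: sumr_ge0 => j _; apply: node_weight_ge0.
have := bal_le k v; rewrite balE.
have : (outdeg e v)%:R * node_weight k v <= N%:R * node_weight k v.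
  by rewrite ler_wpM2r ?node_weight_ge0 // ler_nat outdeg_le.
rewrite /hop; lra.
Qed.

Lemma node_weight_path k p u :
  path e u p -> node_weight k u <= iter (size p) hop (node_weight k (last u p)).
Proof.
elim: p u => [|v p IH] u //= /andP[euv /IH le_v].
exact: le_trans (node_weight_edge k euv) (hop_mono le_v).
Qed.

Definition weight_bound : R := iter N hop 1.

Hypothesis connected : forall i j, connect e i j.

Lemma node_weight_le_unfired k z :
  ~~ has_fired k z -> forall u, node_weight k u <= weight_bound.
Proof.
move=> /node_weight_unfired unfired_z u.
have N_gt0 : (0 < N)%N by apply: leq_ltn_trans (ltn_ord u).
have /connectP [p pth z_last] := connected u z.
case: (shortenP pth) z_last => q qth uniq_q _ z_last.
apply: le_trans (node_weight_path k qth) _; rewrite -z_last unfired_z.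
have size_q : (size q < N)%N.
  by have := max_card (mem (u :: q)); rewrite card_ord (card_uniqP uniq_q).
have -> : weight_bound = iter (size q) hop (iter (N - size q) hop 1).
  by rewrite /weight_bound -iterD subnKC // ltnW.
by apply/iter_hop_mono/iter_hop_ge; rewrite ?ler01.
Qed.

Lemma bal_all_fired k : (forall z, has_fired k z) -> forall i, bal k i = 0.
Proof.
move=> all_fired i; apply: (psumr_eq0P (P := xpredT)) (sum_bal k) i isT.
by move=> z _; apply: bal_fired_ge0.
Qed.

Lemma flag_all_fired k i j : e j i -> (forall z, has_fired k z) -> flag k j = 0.
Proof.
move=> eji /bal_all_fired /(_ j) bal0.
have outdeg_gt0 : (0 < outdeg e j)%N.
  by rewrite /outdeg card_gt0; apply/set0Pn; exists i; rewrite inE.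
case: flagP => // up; have : 0 < (outdeg e j)%:R * gamma k.
  by rewrite mulr_gt0 ?ltr0n.
lra.
Qed.

Hypothesis gamma_le1 : forall k, gamma k <= 1.

Lemma node_weight_bounded k i j : e j i -> node_weight k j <= weight_bound + 1.
Proof.
move=> eji; have bound_ge0 : 0 <= weight_bound by apply/iter_hop_ge0/ler01.
elim: k => [|k IH] /=; first lra.
have [/existsP[z /node_weight_le_unfired /(_ j) le_bound]|all_fired] :=
  boolP [exists z, ~~ has_fired k z].
  have : flag k j * gamma k <= 1 by rewrite mulr_ile1 ?flag_ge0 ?flag_le1 ?(ltW (gamma_gt0 k)).
  lra.
rewrite (flag_all_fired eji) ?mul0r ?addr0 // => z.
by apply: contraNT all_fired => unfired; apply/existsP; exists z.
Qed.

End WeightBalancing.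

Theorem lemma4 (R : realFieldType) (N : nat) (e : rel 'I_N) (gamma : nat -> R)
  (Hirr : forall i : 'I_N, ~~ e i i)
  (Hsc : forall i j : 'I_N, connect e i j)
  (Hgamma : forall n k : nat, (2 ^ n - 1 <= k <= 2 ^ n.+1 - 2)%N ->
              gamma k = (2%:R ^+ n)^-1) :
  exists M : R, forall (k : nat) (i j : 'I_N), `|weights e gamma k i j| <= M.
Proof.
have gamma_gt0 k : 0 < gamma k by have /andP[] := dyadic_step_bounds Hgamma k.
have gamma_le1 k : gamma k <= 1 by have /andP[] := dyadic_step_bounds Hgamma k.
exists (weight_bound R N + 1) => k i j.
rewrite weightsE; case: ifP => [eji|_].
  rewrite ger0_norm ?node_weight_ge0 //.
  exact (node_weight_bounded gamma_gt0 Hsc gamma_le1 k eji).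
rewrite normr0 addr_ge0 ?ler01 //.
exact/iter_hop_ge0/ler01.
Qed.
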